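(* Let $S$ be an affine semigroup, $K$ a field, $F$ a nonempty face of $\mathrm{pos}(S)$, and $\gamma_1,\ldots,\gamma_k\in S$. Suppose that $\widetilde{S_F}$ is a free commutative monoid and the images of $\gamma_1,\ldots,\gamma_k$ form a basis of it. Then: (1) $F$ is contained in precisely $k$ facets $F_i=\mathrm{pos}(S)\cap H_i$ ($i=1,\ldots,k$) of $\mathrm{pos}(S)$, and $F=F_1\cap\cdots\cap F_k$; (2) $\sigma_i(\gamma_j)=\delta_{ij}$ for all $1\le i,j\le k$, where $\sigma_i$ is the primitive linear form associated with $H_i$; (3) $\mathrm{grp}(S\cap F)=\mathrm{grp}(S)\cap H_1\cap\cdots\cap H_k$.
   Context: An affine semigroup is a finitely generated submonoid $S$ of $\mathbb{Z}^n$ (containing $0$) with $\mathrm{grp}(S)=\mathbb{Z}^n$. $\mathrm{pos}(S)$ is the set of nonnegative real linear combinations of elements of $S$; a face is its intersection with a supporting hyperplane, and a facet is a face of codimension one (codimension $=n-\dim$ of the linear span). Each facet has the form $\mathrm{pos}(S)\cap H$ where $H=\{\sigma=0\}$ and $\sigma$ is a primitive linear form (a linear form with relatively prime integer coefficients) with $\sigma\ge 0$ on $\mathrm{pos}(S)$; $\sigma$ is called the primitive linear form associated with $H$. $S_F=\{\alpha-\beta:\alpha\in S,\beta\in S\cap F\}$, whose group of units is $\mathrm{grp}(S\cap F)$, and $\widetilde{S_F}$ is the quotient of $S_F$ by its group of units. *)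

From HB Require Import structures.
From mathcomp Require Import all_boot all_order all_algebra.
Set Implicit Arguments. Unset Strict Implicit. Unset Printing Implicit Defensive.
Import Order.TTheory GRing.Theory Num.Theory.
Local Open Scope ring_scope.

(* Integer points of Z^n are row vectors 'rV[int]_n; points of R^n are
   'rV[R]_n for a real field R (the paper's R is an instance). *)

Definition inS (n : nat) (gens : seq 'rV[int]_n) (v : 'rV[int]_n) : Prop :=
  exists c : 'I_(size gens) -> nat, v = \sum_(i < size gens) gens`_i *+ c i.

Definition grp (n : nat) (A : 'rV[int]_n -> Prop) (v : 'rV[int]_n) : Prop :=
  exists a b, A a /\ A b /\ v = a - b.

Definition affine_semigroup (n : nat) (gens : seq 'rV[int]_n) : Prop :=
  forall v : 'rV[int]_n, grp (inS gens) v.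

Definition realv (R : realFieldType) (n : nat) (v : 'rV[int]_n) : 'rV[R]_n :=
  map_mx (fun z : int => z%:~R) v.

Definition pos (R : realFieldType) (n : nat) (gens : seq 'rV[int]_n)
    (x : 'rV[R]_n) : Prop :=
  exists (m : nat) (c : 'I_m -> R) (a : 'I_m -> 'rV[int]_n),
    (forall i, inS gens (a i)) /\ (forall i, 0 <= c i) /\
    x = \sum_(i < m) c i *: realv R (a i).

Definition lf (R : realFieldType) (n : nat) (t x : 'rV[R]_n) : R :=
  \sum_(j < n) t 0 j * x 0 j.

Definition lfZ (n : nat) (t x : 'rV[int]_n) : int :=
  \sum_(j < n) t 0 j * x 0 j.

(* F is a face of pos(S): F = pos(S) ∩ {t = 0} for a linear form t that is
   nonnegative on pos(S) (t = 0 allowed, giving the improper face pos(S)). *)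
Definition is_face (R : realFieldType) (n : nat) (gens : seq 'rV[int]_n)
    (F : 'rV[R]_n -> Prop) : Prop :=
  exists t : 'rV[R]_n,
    (forall x, pos gens x -> 0 <= lf t x) /\
    (forall x, F x <-> (pos gens x /\ lf t x = 0)).

Definition dim_span (R : realFieldType) (n : nat) (A : 'rV[R]_n -> Prop)
    (d : nat) : Prop :=
  (exists (m : nat) (vs : 'I_m -> 'rV[R]_n),
      (forall i, A (vs i)) /\ \rank (\matrix_(i < m) vs i) = d) /\
  (forall (m : nat) (vs : 'I_m -> 'rV[R]_n),
      (forall i, A (vs i)) -> (\rank (\matrix_(i < m) vs i) <= d)%N).

Definition is_facet (R : realFieldType) (n : nat) (gens : seq 'rV[int]_n)
    (G : 'rV[R]_n -> Prop) : Prop :=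
  is_face gens G /\ exists d : nat, dim_span G d /\ d.+1 = n.

Definition primitive (n : nat) (s : 'rV[int]_n) : Prop :=
  (\big[gcdn/0%N]_(j < n) absz (s ord0 j) = 1)%N.

Definition inSF (R : realFieldType) (n : nat) (gens : seq 'rV[int]_n)
    (F : 'rV[R]_n -> Prop) (v : 'rV[int]_n) : Prop :=
  inS gens v /\ F (realv R v).

Definition S_F (R : realFieldType) (n : nat) (gens : seq 'rV[int]_n)
    (F : 'rV[R]_n -> Prop) (v : 'rV[int]_n) : Prop :=
  exists a b, inS gens a /\ inSF gens F b /\ v = a - b.

(* The quotient ~S_F = S_F / grp(S ∩ F) is a free commutative monoid with
   basis the images of gam_1..gam_k: every class of S_F is the class of a
   unique N-combination of the gam_j (classes x ~ y iff x - y ∈ grp(S∩F)). *)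
Definition free_basis_mod (R : realFieldType) (n k : nat)
    (gens : seq 'rV[int]_n) (F : 'rV[R]_n -> Prop)
    (gam : 'I_k -> 'rV[int]_n) : Prop :=
  (forall x, S_F gens F x ->
     exists c : 'I_k -> nat,
       grp (inSF gens F) (x - \sum_(j < k) gam j *+ c j)) /\
  (forall c d : 'I_k -> nat,
     grp (inSF gens F) (\sum_(j < k) gam j *+ c j - \sum_(j < k) gam j *+ d j) ->
     forall j, c j = d j).

Definition hyp_section (R : realFieldType) (n : nat) (gens : seq 'rV[int]_n)
    (s : 'rV[int]_n) (x : 'rV[R]_n) : Prop :=
  pos gens x /\ lf (realv R s) x = 0.

From HB Require Import structures.
From mathcomp Require Import all_boot all_order all_algebra zify.
From Stdlib Require Import ClassicalEpsilon.
Import Order.TTheory GRing.Theory Num.Theory.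
Local Open Scope ring_scope.
Set Implicit Arguments. Unset Strict Implicit. Unset Printing Implicit Defensive.

(* Since
   grp(S) = Z^n and every element of S_F is congruent modulo grp(S∩F) to a
   unique N-combination of the γ_j, every v ∈ Z^n is congruent modulo
   grp(S∩F) to a unique Z-combination Σ_j coord v j · γ_j.  The coordinate
   maps v ↦ coord v i are additive, nonnegative on S, satisfy
   coord γ_j i = δ_ij, and all vanish exactly on grp(S∩F).  Being additive
   on Z^n they are integer linear forms σ_i.  Consequently:
   - σ_i ≥ 0 on pos(S), and F = pos(S) ∩ {σ_1 = … = σ_k = 0};
   - σ_i(γ_i) = 1 makes σ_i primitive and the faces F_i = pos(S) ∩ {σ_i = 0}
     pairwise distinct;
   - F_i is a facet: it lies in the hyperplane σ_i = 0, and it contains the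
     elements of S ∩ F and the γ_j (j ≠ i), which together with γ_i span Z^n;
   - a form u ≥ 0 on pos(S) vanishing on F agrees on pos(S) with
     Σ_j u(γ_j) σ_j; if {u = 0} cuts out a facet, exactly one u(γ_j) is
     nonzero (none would give all of pos(S), two would give codimension ≥ 2),
     so that facet is one of the F_i. *)

Lemma realv0 (R : realFieldType) n : realv R (0 : 'rV[int]_n) = 0.
Proof. by rewrite /realv raddf0. Qed.
Lemma realvD (R : realFieldType) n (a b : 'rV[int]_n) :
  realv R (a + b) = realv R a + realv R b.
Proof. by rewrite /realv raddfD. Qed.
Lemma realvB (R : realFieldType) n (a b : 'rV[int]_n) :
  realv R (a - b) = realv R a - realv R b.
Proof. by rewrite /realv raddfB. Qed.
Lemma realvMz (R : realFieldType) n (a : 'rV[int]_n) z :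
  realv R (a *~ z) = z%:~R *: realv R a.
Proof. by rewrite /realv raddfMz scaler_int. Qed.
Lemma realvMn (R : realFieldType) n (a : 'rV[int]_n) (z : nat) :
  realv R (a *+ z) = z%:R *: realv R a.
Proof. by rewrite /realv raddfMn scaler_nat. Qed.
Lemma realv_sum (R : realFieldType) n m (f : 'I_m -> 'rV[int]_n) :
  realv R (\sum_(i < m) f i) = \sum_(i < m) realv R (f i).
Proof. by rewrite /realv raddf_sum. Qed.

Lemma realv_delta (R : realFieldType) n (l : 'I_n) :
  realv R (delta_mx 0 l : 'rV[int]_n) = delta_mx 0 l.
Proof. by apply/matrixP => a b; rewrite !mxE; case: (_ && _). Qed.

Lemma realv_comb (R : realFieldType) n m (f : 'I_m -> 'rV[int]_n) (z : 'I_m -> int) :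
  realv R (\sum_(q < m) f q *~ z q) = (\row_q (z q)%:~R) *m (\matrix_q realv R (f q)).
Proof.
rewrite realv_sum mulmx_sum_row; apply: eq_bigr => q _.
by rewrite realvMz rowK mxE.
Qed.

Lemma lf0 (R : realFieldType) n (t : 'rV[R]_n) : lf t 0 = 0.
Proof. by rewrite /lf big1 // => j _; rewrite mxE mulr0. Qed.
Lemma lfD (R : realFieldType) n (t x y : 'rV[R]_n) : lf t (x + y) = lf t x + lf t y.
Proof. by rewrite /lf -big_split /=; apply: eq_bigr => j _; rewrite mxE mulrDr. Qed.
Lemma lf_scale (R : realFieldType) n (t x : 'rV[R]_n) c : lf t (c *: x) = c * lf t x.
Proof. by rewrite /lf mulr_sumr; apply: eq_bigr => j _; rewrite mxE mulrCA. Qed.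
Lemma lfB (R : realFieldType) n (t x y : 'rV[R]_n) : lf t (x - y) = lf t x - lf t y.
Proof. by rewrite lfD -scaleN1r lf_scale mulN1r. Qed.
Lemma lf_sum (R : realFieldType) n m (t : 'rV[R]_n) (f : 'I_m -> 'rV[R]_n) :
  lf t (\sum_(i < m) f i) = \sum_(i < m) lf t (f i).
Proof. by elim/big_rec2: _ => [|i y1 y2 _ <-]; rewrite ?lf0 ?lfD. Qed.

Lemma lf_realv (R : realFieldType) n (s v : 'rV[int]_n) :
  lf (realv R s) (realv R v) = (lfZ s v)%:~R.
Proof.
by rewrite /lf /lfZ rmorph_sum; apply: eq_bigr => j _; rewrite !mxE rmorphM.
Qed.

Lemma rank_annihilated_le (R : realFieldType) n m p (V : 'M[R]_(m,n))
    (w y : 'I_p -> 'rV[R]_n) :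
  (forall a b, lf (w a) (y b) = (a == b)%:R) ->
  (forall l a, lf (w a) (row l V) = 0) -> (\rank V + p <= n)%N.
Proof.
move=> hwy hV.
pose W : 'M[R]_(p, n) := \matrix_a w a.
pose Y : 'M[R]_(p, n) := \matrix_b y b.
have YW1 : Y *m W^T = 1%:M.
  apply/matrixP => a b; rewrite !mxE eq_sym -(hwy b a) /lf.
  by apply: eq_bigr => l _; rewrite !mxE mulrC.
have VW0 : V *m W^T = 0.
  apply/matrixP => l a; rewrite [RHS]mxE -(hV l a) mxE /lf.
  by apply: eq_bigr => j _; rewrite !mxE mulrC.
have rankW : (p <= \rank W^T)%N by rewrite -{1}(mxrank1 R p) -YW1 mxrankM_maxr.
have rankV : (\rank V <= n - \rank W^T)%N.
  by rewrite -mxrank_ker; apply: mxrankS; apply/sub_kermxP.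
apply: (leq_trans (leq_add rankV rankW)).
by rewrite subnK // rank_leq_row.
Qed.

Lemma rank_spanning_ge (R : realFieldType) n m (M : 'M[R]_(m,n)) (y : 'rV[R]_n) :
  (forall l : 'I_n, exists (z : 'rV[R]_m) (c : R), delta_mx 0 l = z *m M + c *: y) ->
  (n <= \rank M + 1)%N.
Proof.
move=> hspan.
have full : (1%:M <= col_mx M y)%MS.
  apply/row_subP => l; rewrite row1; have [z [c ->]] := hspan l.
  by rewrite -mul_scalar_mx -mul_row_col submxMl.
have rank_sum : (n <= \rank (M + y)%MS)%N.
  by rewrite -{1}(mxrank1 R n) addsmxE mxrankS.
apply: (leq_trans rank_sum); apply: (leq_trans (mxrank_adds_leqif M y)).
by rewrite leq_add2l rank_leq_row.
Qed.

Section GeneratedGroup.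
Variables (n : nat) (A : 'rV[int]_n -> Prop).
Hypotheses (A0 : A 0) (AD : forall a b, A a -> A b -> A (a + b)).

Lemma grp0 : grp A 0.
Proof. by exists 0, 0; rewrite subrr. Qed.

Lemma grpB u v : grp A u -> grp A v -> grp A (u - v).
Proof.
move=> [a [b [ha [hb ->]]]] [c [d [hc [hd ->]]]].
exists (a + d), (b + c); split; first exact: AD.
by split; [exact: AD | rewrite opprB opprD addrACA addrC].
Qed.

Lemma grpD u v : grp A u -> grp A v -> grp A (u + v).
Proof. by move=> hu hv; rewrite -[v]opprK -[- v]sub0r; apply/grpB/grpB/hv/grp0. Qed.

Lemma grp_sum m (f : 'I_m -> 'rV[int]_n) :
  (forall i, grp A (f i)) -> grp A (\sum_(i < m) f i).
Proof. by move=> hf; elim/big_ind: _ => //; [exact: grp0 | exact: grpD]. Qed.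

Lemma grpMz u z : grp A u -> grp A (u *~ z).
Proof.
move=> hu; have grpMn (m : nat) : grp A (u *+ m).
  by elim: m => [|m IH]; rewrite ?mulr0n ?mulrS; [exact: grp0 | exact: grpD].
case: z => m; first by rewrite -pmulrn.
by rewrite NegzE mulrNz -[- _]sub0r -pmulrn; apply/grpB/grpMn/grp0.
Qed.

End GeneratedGroup.

(* The positive and negative parts of an integer; they turn Z-combinations
   of the γ_j into differences of N-combinations. *)
Definition pos_part (z : int) : nat := if z is Posz m then m else 0.
Definition neg_part (z : int) : nat := if z is Negz m then m.+1 else 0.

Lemma int_nat_diff (z : int) : z = (pos_part z)%:Z - (neg_part z)%:Z.
Proof. by case: z => m; rewrite /= ?subr0 ?NegzE ?sub0r. Qed.

Lemma inS0 n (gens : seq 'rV[int]_n) : inS gens 0.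
Proof. by exists (fun _ => 0%N); rewrite big1 // => i _; rewrite mulr0n. Qed.

Lemma inSD n (gens : seq 'rV[int]_n) a b :
  inS gens a -> inS gens b -> inS gens (a + b).
Proof.
move=> [c1 ->] [c2 ->]; exists (fun i => c1 i + c2 i)%N.
by rewrite -big_split; apply: eq_bigr => i _; rewrite mulrnDr.
Qed.

Lemma inS_gen n (gens : seq 'rV[int]_n) (a : 'I_(size gens)) : inS gens gens`_a.
Proof.
exists (fun q => (q == a) : nat); rewrite (bigD1 a) //= eqxx mulr1n big1 ?addr0 //.
by move=> q /negbTE ->; rewrite mulr0n.
Qed.

Lemma pos_realv (R : realFieldType) n (gens : seq 'rV[int]_n) a :
  inS gens a -> pos gens (realv R a).
Proof.
by move=> ha; exists 1%N, (fun _ => 1), (fun _ => a); rewrite big_ord1 scale1r.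
Qed.

Lemma pos0 (R : realFieldType) n (gens : seq 'rV[int]_n) : pos gens (0 : 'rV[R]_n).
Proof. by rewrite -(realv0 R); apply/pos_realv/inS0. Qed.

Lemma cone_form_zero_terms (R : realFieldType) n (gens : seq 'rV[int]_n)
    (w : 'rV[R]_n) m (c : 'I_m -> R) (a : 'I_m -> 'rV[int]_n) :
  (forall x, pos gens x -> 0 <= lf w x) -> (forall i, inS gens (a i)) ->
  (forall i, 0 <= c i) ->
  lf w (\sum_(i < m) c i *: realv R (a i)) = 0 ->
  forall i, c i = 0 \/ lf w (realv R (a i)) = 0.
Proof.
move=> hw ha hc; rewrite lf_sum => hsum i.
have term_ge0 j : predT j -> 0 <= lf w (c j *: realv R (a j)).
  by move=> _; rewrite lf_scale mulr_ge0 // hw //; apply: pos_realv.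
have /eqP := psumr_eq0P term_ge0 hsum (i:=i) isT.
by rewrite lf_scale mulf_eq0 => /orP[/eqP|/eqP]; auto.
Qed.

(* When grp(S) = Z^n, the generators of S span Z^n over Z, hence their real
   images have full rank n. *)
Lemma gens_rank_full (R : realFieldType) n (gens : seq 'rV[int]_n) :
  affine_semigroup gens -> (n <= \rank (\matrix_(a < size gens) realv R gens`_a))%N.
Proof.
move=> hS; have full : (1%:M <= \matrix_(a < size gens) realv R gens`_a)%MS.
  apply/row_subP => l; rewrite row1 -(realv_delta R l).
  have [s [s' [[c ->] [[c' ->] ->]]]] := hS (delta_mx 0 l).
  have -> : \sum_(a < size gens) gens`_a *+ c a - \sum_(a < size gens) gens`_a *+ c' a
            = \sum_(a < size gens) gens`_a *~ ((c a)%:Z - (c' a)%:Z).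
    by rewrite -sumrB; apply: eq_bigr => a _; rewrite mulrzBr -!pmulrn.
  by rewrite realv_comb submxMl.
by rewrite -{1}(mxrank1 R n) mxrankS.
Qed.

(* pos(S) itself is not a facet: a facet cannot contain all generators of S,
   since those have full rank n. *)
Lemma facet_misses_gen (R : realFieldType) n (gens : seq 'rV[int]_n)
    (G : 'rV[R]_n -> Prop) :
  affine_semigroup gens -> is_facet gens G ->
  (forall a : 'I_(size gens), G (realv R gens`_a)) -> False.
Proof.
move=> hS [_ [d [[_ rank_le] hd]]] hG.
have := leq_trans (gens_rank_full R hS) (rank_le _ _ hG).
by rewrite -hd ltnn.
Qed.

Section FreeQuotient.
Variables (R : realFieldType) (n : nat) (gens : seq 'rV[int]_n)
  (F : 'rV[R]_n -> Prop) (t : 'rV[R]_n) (k : nat) (gam : 'I_k -> 'rV[int]_n).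
Hypotheses (hS : affine_semigroup gens)
  (ht : forall x, pos gens x -> 0 <= lf t x)
  (hFt : forall x, F x <-> pos gens x /\ lf t x = 0)
  (hgam : forall j, inS gens (gam j)) (hfree : free_basis_mod gens F gam).

Local Notation grpSF := (grp (inSF gens F)).
Local Notation comb a := (\sum_(j < k) gam j *~ a j).

Lemma inSF0 : inSF gens F 0.
Proof.
split; first exact: inS0.
by apply/hFt; rewrite realv0 lf0; split=> //; apply: pos0.
Qed.

Lemma inSFD a b : inSF gens F a -> inSF gens F b -> inSF gens F (a + b).
Proof.
move=> [ha /hFt [_ ha0]] [hb /hFt [_ hb0]]; split; first exact: inSD.
apply/hFt; split; first by apply/pos_realv/inSD.
by rewrite realvD lfD ha0 hb0 addr0.
Qed.

Lemma grpSF_form v : grpSF v -> lf t (realv R v) = 0.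
Proof.
move=> [a [b [[_ /hFt [_ ha]] [[_ /hFt [_ hb]] ->]]]].
by rewrite realvB lfB ha hb subrr.
Qed.

Lemma inSF_grpSF b : inSF gens F b -> grpSF b.
Proof. by move=> hb; exists b, 0; rewrite subr0; split=> //; split=> //; exact: inSF0. Qed.

Lemma inS_S_F s : inS gens s -> S_F gens F s.
Proof. by move=> hs; exists s, 0; rewrite subr0; split=> //; split=> //; exact: inSF0. Qed.

Lemma comb_nat (c : 'I_k -> nat) :
  \sum_(j < k) gam j *+ c j = comb (fun j => (c j)%:Z).
Proof. by apply: eq_bigr => j _; rewrite -pmulrn. Qed.

Lemma comb_uniq (a a' : 'I_k -> int) : grpSF (comb a - comb a') -> a =1 a'.
Proof.
move=> h j; pose b i := a i - a' i.
have split_b : comb a - comb a' = comb (fun i => (pos_part (b i))%:Z)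
                                - comb (fun i => (neg_part (b i))%:Z).
  rewrite -!sumrB; apply: eq_bigr => i _.
  by rewrite -!mulrzBr -int_nat_diff.
rewrite split_b -!comb_nat in h.
apply/eqP; rewrite -subr_eq0 -/(b j) [b j]int_nat_diff.
by rewrite (hfree.2 _ _ h j) subrr.
Qed.

Lemma coord_exists v : exists a : 'I_k -> int, grpSF (v - comb a).
Proof.
have [s [s' [hs [hs' ->]]]] := hS v.
have [c hc] := hfree.1 _ (inS_S_F hs); have [c' hc'] := hfree.1 _ (inS_S_F hs').
exists (fun j => (c j)%:Z - (c' j)%:Z).
have -> : s - s' - comb (fun j => (c j)%:Z - (c' j)%:Z) =
          (s - \sum_(j < k) gam j *+ c j) - (s' - \sum_(j < k) gam j *+ c' j).
  have -> : comb (fun j => (c j)%:Z - (c' j)%:Z) =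
            comb (fun j => (c j)%:Z) - comb (fun j => (c' j)%:Z).
    by rewrite -sumrB; apply: eq_bigr => j _; rewrite mulrzBr.
  rewrite !comb_nat opprB [in RHS]opprB addrACA [in RHS]addrACA.
  by rewrite [- \sum_(j < k) _ + _]addrC.
exact (grpB inSFD hc hc').
Qed.

Definition coord (v : 'rV[int]_n) : 'I_k -> int :=
  proj1_sig (constructive_indefinite_description _ (coord_exists v)).

Lemma coord_spec v : grpSF (v - comb (coord v)).
Proof. exact: (proj2_sig (constructive_indefinite_description _ (coord_exists v))). Qed.

Lemma coord_eq v a : grpSF (v - comb a) -> coord v =1 a.
Proof.
move=> h; apply: comb_uniq.
have -> : comb (coord v) - comb a = (v - comb a) - (v - comb (coord v)).
  by rewrite opprB [RHS]addrC addrA subrK.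
exact (grpB inSFD h (coord_spec v)).
Qed.

Lemma coord_ge0 a j : inS gens a -> 0 <= coord a j.
Proof.
move=> ha; have [c hc] := hfree.1 _ (inS_S_F ha).
by rewrite comb_nat in hc; rewrite (coord_eq hc).
Qed.

Lemma coord_grpSF v j : grpSF v -> coord v j = 0.
Proof.
move=> hv; rewrite (@coord_eq v (fun _ => 0)) //.
by rewrite big1 ?subr0 // => i _; rewrite mulr0z.
Qed.

Lemma grpSF_coord0 v : coord v =1 (fun _ => 0) -> grpSF v.
Proof.
move=> h; have := coord_spec v.
by rewrite big1 ?subr0 // => j _; rewrite h mulr0z.
Qed.

Lemma coord_gam i j : coord (gam j) i = (i == j)%:R.
Proof.
rewrite (@coord_eq (gam j) (fun i => (i == j)%:R)) //.
rewrite (bigD1 j) //= eqxx big1 ?addr0 ?subrr; first exact: grp0 inSF0.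
by move=> l /negbTE ->; rewrite mulr0z.
Qed.

Definition facet_form (i : 'I_k) : 'rV[int]_n := \row_l coord (delta_mx 0 l) i.

Local Notation sigmaR i := (realv R (facet_form i)).
Local Notation Fsec i := (hyp_section (R:=R) gens (facet_form i)).

Lemma lfZ_facet_form i v : lfZ (facet_form i) v = coord v i.
Proof.
symmetry; apply: (@coord_eq v (fun j => lfZ (facet_form j) v)) i.
pose e (l : 'I_n) : 'rV[int]_n := delta_mx 0 l.
have v_units : v = \sum_(l < n) e l *~ v 0 l.
  by rewrite {1}(row_sum_delta v); apply: eq_bigr => l _; rewrite -scaler_int intz.
have -> : comb (fun j => lfZ (facet_form j) v) = \sum_(l < n) comb (coord (e l)) *~ v 0 l.
  rewrite /lfZ; under eq_bigr => j _ do rewrite mulrz_sumr.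
  rewrite exchange_big /=; apply: eq_bigr => l _.
  by rewrite mulrz_suml; apply: eq_bigr => j _; rewrite mxE mulrzA.
rewrite {1}v_units -sumrB; apply: (grp_sum inSF0 inSFD) => l.
by rewrite -mulrzBl; apply: (grpMz inSF0 inSFD); apply: coord_spec.
Qed.

Lemma lf_facet_form i v : lf (sigmaR i) (realv R v) = (coord v i)%:~R.
Proof. by rewrite lf_realv lfZ_facet_form. Qed.

Lemma facet_form_ge0 i x : pos gens x -> 0 <= lf (sigmaR i) x.
Proof.
move=> [m [c [a [ha [hc ->]]]]]; rewrite lf_sum; apply: sumr_ge0 => l _.
by rewrite lf_scale lf_facet_form mulr_ge0 // ler0z coord_ge0.
Qed.

(* ... and vanishes on F, since F is generated by elements of S ∩ F. *)
Lemma facet_form_F i x : F x -> lf (sigmaR i) x = 0.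
Proof.
move=> /hFt [[m [c [a [ha [hc hx]]]]] hx0].
have zero_terms := cone_form_zero_terms ht ha hc.
rewrite hx in hx0 *; rewrite lf_sum big1 // => l _.
rewrite lf_scale lf_facet_form.
case: (zero_terms hx0 l) => [->|hl]; first by rewrite mul0r.
rewrite coord_grpSF ?mulr0 //; apply: inSF_grpSF.
by split=> //; apply/hFt; split=> //; apply: pos_realv.
Qed.

Lemma F_char x : F x <-> pos gens x /\ forall i, lf (sigmaR i) x = 0.
Proof.
split=> [hx | [hp hs]].
  by split=> [|i]; [case/hFt: hx | exact: facet_form_F].
apply/hFt; split=> //; move: hp => [m [c [a [ha [hc hx]]]]].
rewrite hx lf_sum big1 // => l _; rewrite lf_scale.
have [->|cl_neq0] := eqVneq (c l) 0; first by rewrite mul0r.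
rewrite grpSF_form ?mulr0 //; apply: grpSF_coord0 => i.
have := cone_form_zero_terms (@facet_form_ge0 i) ha hc.
rewrite -hx => /(_ (hs i) l) [/eqP|]; first by rewrite (negbTE cl_neq0).
by rewrite lf_facet_form => /eqP; rewrite intr_eq0 => /eqP.
Qed.

Lemma grpSF_char v :
  grpSF v <-> grp (inS gens) v /\ forall i, lfZ (facet_form i) v = 0.
Proof.
split=> [hv | [_ h]].
  by split=> [|i]; [exact: hS | rewrite lfZ_facet_form coord_grpSF].
by apply: grpSF_coord0 => j; rewrite -lfZ_facet_form.
Qed.

Lemma facet_form_gam i j : lfZ (facet_form i) (gam j) = (i == j)%:R.
Proof. by rewrite lfZ_facet_form coord_gam. Qed.

(* σ_i(γ_i) = 1, so the coefficients of σ_i are coprime. *)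
Lemma facet_form_primitive i : primitive (facet_form i).
Proof.
rewrite /primitive; set d := \big[gcdn/0%N]_(j < n) _.
have d_dvd j : (d%:Z %| facet_form i ord0 j)%Z.
  by rewrite dvdzE absz_nat /d (bigD1 j) //=; exact: dvdn_gcdl.
have : (d%:Z %| lfZ (facet_form i) (gam i))%Z.
  by rewrite /lfZ; apply: rpred_sum => j _; exact: dvdz_mulr.
by rewrite facet_form_gam eqxx dvdz1 absz_nat => /eqP.
Qed.

(* The faces F_i are pairwise distinct: γ_j lies in F_i but not in F_j. *)
Lemma facet_section_inj i j :
  (forall x, Fsec i x <-> Fsec j x) ->
  i = j.
Proof.
move=> same; apply/eqP/negP => /negP hij.
have : Fsec j (realv R (gam j)).
  apply/same; split; first exact: pos_realv.
  by rewrite lf_facet_form coord_gam (negbTE hij).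
by case=> _; rewrite lf_facet_form coord_gam eqxx => /eqP; rewrite intr_eq0.
Qed.

(* Any family inside F_i has rank at most n - 1, by duality with γ_i. *)
Lemma Fsec_rank_le i m (vs : 'I_m -> 'rV[R]_n) :
  (forall q, Fsec i (vs q)) -> (\rank (\matrix_q vs q) + 1 <= n)%N.
Proof.
move=> hvs.
apply: (@rank_annihilated_le R n m 1 _ (fun _ => sigmaR i) (fun _ => realv R (gam i))).
  by move=> a b; rewrite lf_facet_form coord_gam eqxx !ord1 eqxx.
by move=> q a; rewrite rowK; exact: (hvs q).2.
Qed.

(* A spanning family of F_i: the generators of S lying in F (the others
   replaced by 0) and the γ_j for j ≠ i (γ_i replaced by 0). *)
Definition gen_in_F (a : 'I_(size gens)) : 'rV[int]_n :=
  if lf t (realv R gens`_a) == 0 then gens`_a else 0.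
Definition gam_except (i j : 'I_k) : 'rV[int]_n := if j == i then 0 else gam j.

Lemma gen_in_F_inSF a : inSF gens F (gen_in_F a).
Proof.
rewrite /gen_in_F; case: eqP => [ha|_]; last exact: inSF0.
split; first exact: inS_gen.
by apply/hFt; split=> //; apply/pos_realv/inS_gen.
Qed.

Lemma inSF_comb b : inSF gens F b ->
  exists c : 'I_(size gens) -> nat, b = \sum_a gen_in_F a *+ c a.
Proof.
move=> [[c hb] /hFt [_ hb0]]; exists c.
have t_comb : lf t (\sum_a (c a)%:R *: realv R gens`_a) = 0.
  by rewrite -hb0 hb realv_sum; congr lf; apply: eq_bigr => a _; rewrite realvMn.
have zero_terms := cone_form_zero_terms ht (@inS_gen n gens) (fun a => ler0n R (c a)) t_comb.
rewrite {1}hb; apply: eq_bigr => a _; rewrite /gen_in_F; case: eqP => // hne.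
by case: (zero_terms a) => [/eqP|//]; rewrite pnatr_eq0 => /eqP ->; rewrite !mulr0n.
Qed.

Lemma grpSF_comb g : grpSF g ->
  exists z : 'I_(size gens) -> int, g = \sum_a gen_in_F a *~ z a.
Proof.
move=> [b [b' [hb [hb' ->]]]].
have [c ->] := inSF_comb hb; have [c' ->] := inSF_comb hb'.
exists (fun a => (c a)%:Z - (c' a)%:Z).
by rewrite -sumrB; apply: eq_bigr => a _; rewrite mulrzBr -!pmulrn.
Qed.

Lemma span_Fsec_gam i v :
  exists (z1 : 'I_(size gens) -> int) (z2 : 'I_k -> int) (c : int),
    v = \sum_a gen_in_F a *~ z1 a + \sum_j gam_except i j *~ z2 j + gam i *~ c.
Proof.
have [z1 hz1] := grpSF_comb (coord_spec v).
exists z1, (coord v), (coord v i).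
rewrite -hz1 -addrA.
have -> : \sum_j gam_except i j *~ coord v j + gam i *~ coord v i = comb (coord v).
  rewrite [RHS](bigD1 i) //= [in LHS](bigD1 i) //= /gam_except eqxx mul0rz add0r addrC.
  by congr (_ + _); apply: eq_bigr => j /negbTE ->.
by rewrite subrK.
Qed.

Lemma Fsec_rank_ge i : exists m (vs : 'I_m -> 'rV[R]_n),
  (forall q, Fsec i (vs q)) /\ (n <= \rank (\matrix_q vs q) + 1)%N.
Proof.
pose M := col_mx (\matrix_a realv R (gen_in_F a)) (\matrix_j realv R (gam_except i j)).
exists (size gens + k)%N, (fun q => row q M).
have -> : \matrix_q row q M = M by apply/matrixP => a b; rewrite !mxE.
split=> [q|].
  rewrite -(splitK q); case: (split q) => a /=; rewrite /M ?rowKu ?rowKd rowK.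
    have [_ /hFt [hpos _]] := gen_in_F_inSF a.
    split=> //; rewrite lf_facet_form coord_grpSF //.
    exact/inSF_grpSF/gen_in_F_inSF.
  rewrite /gam_except; case: eqP => [_|/eqP hai].
    by split; rewrite realv0; [exact: pos0 | exact: lf0].
  split; first exact: pos_realv.
  by rewrite lf_facet_form coord_gam eq_sym (negbTE hai).
apply: (@rank_spanning_ge R n _ M (realv R (gam i))) => l.
have [z1 [z2 [c hv]]] := span_Fsec_gam i (delta_mx 0 l).
exists (row_mx (\row_a (z1 a)%:~R) (\row_j (z2 j)%:~R)), c%:~R.
by rewrite -(realv_delta R l) hv !realvD realvMz !realv_comb /M mul_row_col.
Qed.

(* σ_i(γ_i) = 1 forces the ambient dimension to be positive. *)
Lemma dim_pos (i : 'I_k) : (0 < n)%N.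
Proof.
have [n0|//] := posnP n; have := facet_form_gam i i.
rewrite eqxx /lfZ big1 // => j _.
by have := ltn_ord j; rewrite {2}n0.
Qed.

Lemma Fsec_facet i : is_facet gens (Fsec i).
Proof.
split; first by exists (sigmaR i); split=> // x; exact: facet_form_ge0.
have n_pos := dim_pos i; exists n.-1; split; last by rewrite prednK.
split=> [|m vs hvs]; last by have := Fsec_rank_le hvs; lia.
have [m [vs [hvs rank_ge]]] := Fsec_rank_ge i.
by exists m, vs; split=> //; have := Fsec_rank_le hvs; lia.
Qed.

Lemma form_expansion (u : 'rV[R]_n) : (forall x, F x -> lf u x = 0) ->
  forall x, pos gens x -> lf u x = \sum_j lf u (realv R (gam j)) * lf (sigmaR j) x.
Proof.
move=> hu.
have on_Zn v : lf u (realv R v) = \sum_j lf u (realv R (gam j)) * (coord v j)%:~R.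
  rewrite -{1}(subrK (comb (coord v)) v) realvD lfD.
  have [b [b' [[_ hb] [[_ hb'] ->]]]] := coord_spec v.
  rewrite realvB lfB (hu _ hb) (hu _ hb') subrr add0r realv_sum lf_sum.
  by apply: eq_bigr => j _; rewrite realvMz lf_scale mulrC.
move=> x [m [c [a [ha [hc ->]]]]]; rewrite lf_sum.
under eq_bigr => l _ do rewrite lf_scale on_Zn mulr_sumr.
rewrite exchange_big /=; apply: eq_bigr => j _.
rewrite lf_sum mulr_sumr; apply: eq_bigr => l _.
by rewrite lf_scale lf_facet_form mulrCA.
Qed.

(* A facet cannot lie in two distinct F_i: by duality with the γ's its span
   would have codimension at least two. *)
Lemma facet_in_two_Fsec (Gs : 'rV[R]_n -> Prop) i j : is_facet gens Gs ->
  (forall x, Gs x -> lf (sigmaR i) x = 0 /\ lf (sigmaR j) x = 0) -> i = j.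
Proof.
move=> [_ [d [[[m [vs [hvs hrk]]] _] hd]]] hGs; apply/eqP/negP => /negP hij.
pose sel (a : 'I_2) := if a == ord0 then i else j.
have sel_eq a b : (sel a == sel b) = (a == b).
  rewrite /sel; case: a b => [[|[|?]] ?] [[|[|?]] ?] //=;
    by rewrite ?eqxx // ?(negbTE hij) // eq_sym (negbTE hij).
suff : (d + 2 <= n)%N by rewrite -hd addn2 ltnn.
rewrite -hrk; apply: (@rank_annihilated_le R n m 2 _
          (fun a => sigmaR (sel a)) (fun b => realv R (gam (sel b)))).
  by move=> a b; rewrite lf_facet_form coord_gam sel_eq; case: (a == b).
move=> q a; rewrite rowK; have [si sj] := hGs _ (hvs q).
by rewrite /sel; case: ifP.
Qed.

Lemma facet_is_Fsec (Gs : 'rV[R]_n -> Prop) : is_facet gens Gs ->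
  (forall x, F x -> Gs x) -> exists i, forall x, Gs x <-> Fsec i x.
Proof.
move=> facet_G hFG; have [[u [hu hGu]] _] := facet_G.
pose uj j := lf u (realv R (gam j)).
have hexp : forall x, pos gens x -> lf u x = \sum_j uj j * lf (sigmaR j) x.
  exact: form_expansion (fun x Fx => proj2 ((hGu x).1 (hFG x Fx))).
have vanish x : Gs x -> forall j, uj j != 0 -> lf (sigmaR j) x = 0.
  move=> /hGu [hx hx0] j hj.
  have term_ge0 l : predT l -> 0 <= uj l * lf (sigmaR l) x.
    by move=> _; rewrite mulr_ge0 ?facet_form_ge0 //; apply/hu/pos_realv.
  have := psumr_eq0P term_ge0; rewrite -(hexp x hx) hx0 => /(_ erefl j isT) /eqP.
  by rewrite mulf_eq0 (negbTE hj) => /eqP.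
have [/existsP [i hi]|none] := boolP [exists i, uj i != 0]; last first.
  exfalso; apply: (facet_misses_gen hS facet_G) => a.
  have hp : pos gens (realv R gens`_a) by apply/pos_realv/inS_gen.
  apply/hGu; split=> //; rewrite (hexp _ hp) big1 // => j _.
  by move/existsPn: none => /(_ j) /negPn /eqP ->; rewrite mul0r.
exists i => x; split=> [hx | [hx hx0]].
  by split; [case/hGu: hx | exact: vanish].
apply/hGu; split=> //; rewrite (hexp x hx) big1 // => j _.
have [-> | uj0] := eqVneq j i; first by rewrite hx0 mulr0.
have [->|hj] := eqVneq (uj j) 0; first by rewrite mul0r.
exfalso; apply/(negP uj0)/eqP/(facet_in_two_Fsec facet_G) => y hy.
by split; apply: vanish.
Qed.

End FreeQuotient.

Theorem mainTheorem4 (K : fieldType) (R : realFieldType) (n : nat)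
    (gens : seq 'rV[int]_n) (hS : affine_semigroup gens)
    (F : 'rV[R]_n -> Prop) (hF : is_face gens F) (hFne : exists x, F x)
    (k : nat) (gam : 'I_k -> 'rV[int]_n) (hgam : forall j, inS gens (gam j))
    (hfree : free_basis_mod gens F gam) :
  exists sigma : 'I_k -> 'rV[int]_n,
    (* (1) F_i = pos(S) ∩ H_i are facets containing F, sigma_i the
           primitive linear form associated with H_i *)
        (forall i, [/\ primitive (sigma i),
                       (forall x, pos gens x -> 0 <= lf (realv R (sigma i)) x),
                       is_facet gens (hyp_section (R:=R) gens (sigma i)) &
                       (forall x, F x -> hyp_section (R:=R) gens (sigma i) x)]) /\
        (* the F_i are pairwise distinct *)
        (forall i j, (forall x, hyp_section (R:=R) gens (sigma i) x <->
                                hyp_section (R:=R) gens (sigma j) x) -> i = j) /\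
        (* they are all the facets containing F *)
        (forall G : 'rV[R]_n -> Prop, is_facet gens G -> (forall x, F x -> G x) ->
           exists i, forall x, G x <-> hyp_section (R:=R) gens (sigma i) x) /\
        (* F = F_1 ∩ ... ∩ F_k (inside pos(S)) *)
        (forall x, F x <-> (pos gens x /\ forall i, hyp_section (R:=R) gens (sigma i) x)) /\
        (* (2) sigma_i(gam_j) = delta_ij *)
        (forall i j, lfZ (sigma i) (gam j) = (if i == j then 1 else 0)) /\
        (* (3) grp(S ∩ F) = grp(S) ∩ H_1 ∩ ... ∩ H_k *)
        (forall v, grp (inSF gens F) v <->
                   (grp (inS gens) v /\ forall i, lfZ (sigma i) v = 0)).
Proof.
have [t [ht hFt]] := hF.
exists (facet_form hS hFt hfree); split.
  move=> i; split.
  - exact: facet_form_primitive.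
  - exact: facet_form_ge0.
  - exact: Fsec_facet hS ht hFt hgam hfree i.
  - move=> x Fx; split; first by case/hFt: Fx.
    exact: facet_form_F hS ht hFt hfree i x Fx.
split; first by move=> i j; apply: facet_section_inj.
split; first exact: facet_is_Fsec hS hFt hgam hfree.
split.
  move=> x; rewrite (F_char hS ht hFt hfree x); split.
  - by case.
  - by move=> [? hs]; split=> // i; case: (hs i).
split; first by move=> i j; rewrite facet_form_gam; case: (i == j).
exact: grpSF_char.
Qed.
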